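(* Let $t\in(0,\infty)\cap\mathbb Q$ be a reduced fraction. (1) If $0<t<1$, then each subword of $\omega_t$ lying between two consecutive occurrences of $z^{\pm1}$ is either of the form $y^{\pm1}$ or of the form $y^{\pm1}x^{\pm1}y^{\pm1}$. (2) If $1<t<\infty$, then each subword of $\omega_t$ lying between two consecutive occurrences of $x^{\pm1}$ is either of the form $y^{\pm1}$ or of the form $y^{\pm1}z^{\pm1}y^{\pm1}$.
   Context: Modified lattice: the planar graph with vertex set $\mathbb Z^2$ whose edges are the horizontal unit segments, the vertical unit segments, and the diagonal segments of slope $-1$ joining $(i,j+1)$ and $(i+1,j)$. Words $\omega_t$: for reduced $t=p/q\in(0,\infty)$, let $L_t$ be the segment from $(0,0)$ to $(q,p)$, oriented from $(0,0)$ to $(q,p)$. List the edges whose relative interior meets $L_t$, in the order of the intersection points along $L_t$. A horizontal (resp. diagonal, vertical) edge contributes $x$ (resp. $y$, $z$) if its midpoint is not on the right-hand side of $L_t$ (including lying on $L_t$), and $x^{-1}$ (resp. $y^{-1}$, $z^{-1}$) if its midpoint is on the right-hand side. $\omega_t$ is the concatenation of these letters. The notation $y^{\pm1}x^{\pm1}y^{\pm1}$ means a word of three letters with these generators and arbitrary exponents $\pm1$. *)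

From mathcomp Require Import all_boot all_order all_algebra.
Set Implicit Arguments. Unset Strict Implicit. Unset Printing Implicit Defensive.
Import Order.TTheory GRing.Theory Num.Theory.
Local Open Scope ring_scope.

(* Edge kinds of the modified lattice, identified with the generator they
   contribute: GX = horizontal edge (letter x), GY = diagonal edge of slope -1
   (letter y), GZ = vertical edge (letter z). *)
Inductive gen := GX | GY | GZ.

(* An edge is a kind together with an integer anchor (i,j):
   horizontal (GX,(i,j)) : segment (i,j)--(i+1,j)
   vertical   (GZ,(i,j)) : segment (i,j)--(i,j+1)
   diagonal   (GY,(i,j)) : segment (i,j+1)--(i+1,j).
   Each edge of the lattice has exactly one such representation. *)
Definition edge := (gen * (int * int))%type.

Definition cross (a b : int * int) : int := a.1 * b.2 - a.2 * b.1.

(* starting endpoint [edge_a e] and direction [edge_d e]: the edge is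
   { edge_a e + u * edge_d e | 0 <= u <= 1 } *)
Definition edge_a (e : edge) : int * int :=
  match e.1 with
  | GX | GZ => e.2
  | GY => (e.2.1, e.2.2 + 1)
  end.
Definition edge_d (e : edge) : int * int :=
  match e.1 with
  | GX => (1, 0)
  | GZ => (0, 1)
  | GY => (1, -1)
  end.

(* L_t goes from (0,0) to w = (q,p), i.e. is { s * w | 0 <= s <= 1 }. *)
Definition lvec (p q : nat) : int * int := (q%:Z, p%:Z).

(* Solving edge_a e + u * edge_d e = s * w (non-parallel case; the edge
   directions are never parallel to w when p, q > 0). *)
Definition par_u (p q : nat) (e : edge) : rat :=
  (cross (lvec p q) (edge_a e))%:~R / (cross (edge_d e) (lvec p q))%:~R.
Definition par_s (p q : nat) (e : edge) : rat :=
  (cross (edge_a e) (edge_d e))%:~R / (cross (lvec p q) (edge_d e))%:~R.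

Definition crosses (p q : nat) (e : edge) : bool :=
  (0 < par_u p q e < 1) && (0 <= par_s p q e <= 1).

(* Candidate edges: all edges with anchor in [-1,q] x [-1,p]; every edge
   meeting L_t (which lies in the box [0,q] x [0,p]) is among them. *)
Definition candidates (p q : nat) : seq edge :=
  let I := [seq (n%:Z - 1) | n <- iota 0 (q + 2)] in
  let J := [seq (n%:Z - 1) | n <- iota 0 (p + 2)] in
  flatten [seq [seq (k, ij) | ij <- [seq (i, j) | i <- I, j <- J]]
          | k <- [:: GX; GY; GZ]].

Definition crossed_edges (p q : nat) : seq edge :=
  sort (fun e f => par_s p q e <= par_s p q f) [seq e <- candidates p q | crosses p q e].

(* A letter: generator with exponent; true = exponent +1, false = -1. *)
Definition letter := (gen * bool)%type.

(* The midpoint m of e is not on the right-hand side of L_t (oriented from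
   (0,0) to w) iff cross(w, m) >= 0; we use 2m = 2 a + d. *)
Definition letter_of (p q : nat) (e : edge) : letter :=
  (e.1, 0 <= cross (lvec p q)
                   (2 * (edge_a e).1 + (edge_d e).1, 2 * (edge_a e).2 + (edge_d e).2)).

Definition omega (p q : nat) : seq letter := map (letter_of p q) (crossed_edges p q).

Definition is_gen (g : gen) (l : letter) : bool :=
  match g, l.1 with
  | GX, GX | GY, GY | GZ, GZ => true
  | _, _ => false
  end.

Definition between_prop (g a b : gen) (w : seq letter) : Prop :=
  forall i j : nat, (i < j < size w)%N ->
    is_gen g (nth (GX, true) w i) -> is_gen g (nth (GX, true) w j) ->
    (forall k : nat, (i < k < j)%N -> ~~ is_gen g (nth (GX, true) w k)) ->
    let s := drop i.+1 (take j w) in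
    map fst s = [:: a] \/ map fst s = [:: a; b; a].

(* The segment L_t meets the vertical lines x = a (0 < a < q) at times a/q, the
   horizontal lines y = b (0 < b < p) at times b/p and the antidiagonals x + y = k
   (0 < k < p + q) at times k/(p + q), each in the relative interior of exactly one
   edge; as p and q are coprime these times are pairwise distinct, so the generators
   of omega_t are the kinds of three grids of fractions merged in increasing order.
   For p < q, the open interval between consecutive z-times a/q and (a+1)/q contains
   at most one x-time, namely (c+1)/p with c = floor(a p / q), and the y-times
   (a+c+1)/(p+q) and, exactly when that x-time is present, (a+c+2)/(p+q), which flank
   it as mediants. The case q < p is the same with x and z exchanged. *)

From HB Require Import structures.
From mathcomp Require Import all_boot all_order all_algebra.
From mathcomp Require Import zify.
Set Implicit Arguments. Unset Strict Implicit. Unset Printing Implicit Defensive.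
Import Order.TTheory GRing.Theory Num.Theory.

Definition nat_of_gen (g : gen) : nat := match g with GX => 0 | GY => 1 | GZ => 2 end.
Definition gen_of_nat (n : nat) : gen := match n with 0 => GX | 1 => GY | _ => GZ end.
Lemma nat_of_genK : cancel nat_of_gen gen_of_nat. Proof. by case. Qed.
HB.instance Definition _ := Equality.copy gen (can_type nat_of_genK).

Lemma is_genE g l : is_gen g l = (l.1 == g).
Proof. by case: g; case: l => [[]]. Qed.

Lemma window_small_den m n a b c : n < m -> c * m <= a * n < c.+1 * m ->
  (a * n < b * m < a.+1 * n) = (b == c.+1) && (c.+1 * m < a.+1 * n).
Proof.
move=> n_lt_m /andP [lo hi]; apply/idP/idP => [/andP [l r] | /andP [/eqP -> r]].
- have bc : c < b by rewrite ltnNge; apply/negP => h; nia.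
  have cb : b < c.+2 by rewrite ltnNge; apply/negP => h; nia.
  have eb : b = c.+1 by lia.
  by rewrite -eb eqxx r.
- by rewrite hi.
Qed.

Lemma window_sum_den m n a k c : 0 < n < m -> c * m <= a * n < c.+1 * m ->
  (a * (m + n) < k * m < a.+1 * (m + n)) =
  (k == (a + c).+1) || (k == (a + c).+2) && (c.+1 * m < a.+1 * n).
Proof.
move=> /andP [n_gt0 n_lt_m] /andP [lo hi]; apply/idP/idP => [/andP [l r] | ].
- have ak : a + c < k by rewrite ltnNge; apply/negP => h; nia.
  have ka : k < (a + c).+3 by rewrite ltnNge; apply/negP => h; nia.
  have [-> | ek] : k = (a + c).+1 \/ k = (a + c).+2 by lia.
    by rewrite eqxx.
  by apply/orP; right; rewrite ek eqxx /=; nia.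
- case/orP => [/eqP -> | /andP [/eqP -> big]]; apply/andP; split; nia.
Qed.

Lemma slice_nthP (T : eqType) x0 (s : seq T) i j x : j <= size s ->
  reflect (exists2 k, i < k < j & nth x0 s k = x) (x \in drop i.+1 (take j s)).
Proof.
move=> j_le; have size_slice : size (drop i.+1 (take j s)) = j - i.+1.
  by rewrite size_drop size_takel.
apply: (iffP idP) => [x_in | [k /andP [ik kj] <-]].
  have : index x (drop i.+1 (take j s)) < j - i.+1 by rewrite -size_slice index_mem.
  set k := index x _ => k_lt.
  have k_j : i.+1 + k < j by lia.
  exists (i.+1 + k); first lia.
  by rewrite -(@nth_take j _ x0 _ k_j) -nth_drop nth_index.
have -> : nth x0 s k = nth x0 (drop i.+1 (take j s)) (k - i.+1).
  by rewrite nth_drop nth_take; [congr nth; lia | lia].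
by apply: mem_nth; rewrite size_slice; lia.
Qed.

Lemma mem_lt_sorted_slice (T : eqType) (disp : Order.disp_t) (R : preorderType disp)
    (f : T -> R) x0 (s : seq T) i j x :
  sorted (relpre f <%O) s -> i < j < size s ->
  (x \in drop i.+1 (take j s)) = (x \in s) && (f (nth x0 s i) < f x < f (nth x0 s j))%O.
Proof.
rewrite -sorted_map => /lt_sorted_ltn_nth mono /andP [ij js].
have ltn_f k1 k2 : k1 < size s -> k2 < size s ->
    (f (nth x0 s k1) < f (nth x0 s k2))%O = (k1 < k2).
  by move=> k1s k2s; rewrite -!(nth_map x0 (f x0)) // mono // inE size_map.
have i_s : i < size s by apply: ltn_trans js.
apply/idP/andP => [/(slice_nthP x0 i x (ltnW js)) [k /andP [ik kj] <-] | [x_s /andP [lo hi]]].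
  have ks : k < size s by apply: ltn_trans js.
  by rewrite mem_nth // !ltn_f // ik.
apply/(slice_nthP x0 i x (ltnW js)); exists (index x s); last exact: nth_index.
have xs : index x s < size s by rewrite index_mem.
by rewrite -(ltn_f i) -?(ltn_f _ j) ?nth_index ?lo.
Qed.

Local Open Scope ring_scope.

Lemma ltr_frac_nat (R : numFieldType) (x y x' y' : nat) : (0 < y)%N -> (0 < y')%N ->
  (x%:R / y%:R < x'%:R / y'%:R :> R) = (x * y' < x' * y)%N.
Proof.
move=> y_gt0 y'_gt0.
by rewrite ltr_pdivrMr ?ltr0n // mulrAC ltr_pdivlMr ?ltr0n // -!natrM ltr_nat.
Qed.

Lemma frac_nat_coprime_neq (R : numFieldType) (d d' k k' : nat) : coprime d d' ->
  (0 < k < d)%N -> (0 < d')%N -> k%:R / d%:R != k'%:R / d'%:R :> R.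
Proof.
move=> cop /andP [k_gt0 k_lt] d'_gt0; have d_gt0 : (0 < d)%N by apply: ltn_trans k_lt.
rewrite eqr_div ?pnatr_eq0 -?lt0n // -!natrM eqr_nat; apply/negP => /eqP e.
have : (d %| k * d')%N by rewrite e dvdn_mull.
by rewrite Gauss_dvdl // => /(dvdn_leq k_gt0); rewrite leqNgt k_lt.
Qed.

Lemma frac_int_nat (R : numFieldType) (x y z : int) (d : nat) :
  y != 0 -> (0 < d)%N -> x * d%:Z = z * y -> x%:~R / y%:~R = z%:~R / d%:R :> R.
Proof.
move=> y0 d0 e; apply/eqP; rewrite -[d%:R]/(d%:Z%:~R) eqr_div ?intr_eq0 //; last by lia.
by rewrite -!intrM e.
Qed.

Lemma mulz_window_eq0 (d : nat) (x : int) : - d%:Z < d%:Z * x < d%:Z -> x = 0.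
Proof.
move=> /andP [lo hi]; have [x_le | [// | x_ge]] : x <= -1 \/ x = 0 \/ 1 <= x by lia.
all: nia.
Qed.

Section MergedGrids.
Variables (d : gen -> nat) (g1 g2 : gen).
Local Notation m := (d g1).
Local Notation n := (d g2).
Hypotheses (gen_cases : forall g, [\/ g = g1, g = g2 | g = GY]) (dY : d GY = (m + n)%N).
Hypotheses (n_gt0 : (0 < n)%N) (n_lt_m : (n < m)%N) (coprime_mn : coprime m n).

Let m_gt0 : (0 < m)%N := ltn_trans n_gt0 n_lt_m.

Definition grid_point (x : gen * rat) : Prop :=
  exists2 k, (0 < k < d x.1)%N & x.2 = k%:R / (d x.1)%:R.

Variable s : seq (gen * rat).
Hypotheses (s_sorted : sorted (relpre snd <=%R) s) (s_uniq : uniq s).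
Hypothesis mem_s : forall x, x \in s <-> grid_point x.

Lemma coprime_grids g g' : g != g' -> coprime (d g) (d g').
Proof.
have coprime_mY : coprime m (d GY) by rewrite dY /coprime gcdnDl.
have coprime_nY : coprime n (d GY) by rewrite dY /coprime gcdnDr gcdnC.
by case: (gen_cases g) (gen_cases g') => -> [] ->; rewrite ?eqxx // coprime_sym.
Qed.

Lemma snd_inj_grid : {in s &, injective snd}.
Proof.
move=> [g v] [g' v'] /mem_s [k k_d /= ->] /mem_s [k' k'_d /= ->] /= eq_v.
case: (eqVneq g g') eq_v => [<- -> // | neq eq_v].
have d'_gt0 : (0 < d g')%N by case/andP: k'_d => /ltn_trans; apply.
by move/eqP: eq_v; rewrite (negbTE (frac_nat_coprime_neq _ _ (coprime_grids neq) k_d d'_gt0)).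
Qed.

Lemma s_lt_sorted : sorted (relpre snd <%R) s.
Proof.
rewrite -sorted_map lt_sorted_uniq_le map_inj_in_uniq ?sorted_map ?s_sorted ?andbT.
  exact: s_uniq.
exact: snd_inj_grid.
Qed.

Definition window_points (a : nat) : seq (gen * rat) :=
  let c := (a * n %/ m)%N in
  (GY, (a + c).+1%:R / (m + n)%:R) ::
  if (c.+1 * m < a.+1 * n)%N
  then [:: (g2, c.+1%:R / n%:R); (GY, (a + c).+2%:R / (m + n)%:R)] else [::].

Lemma floor_bounds a : ((a * n %/ m) * m <= a * n < (a * n %/ m).+1 * m)%N.
Proof. by rewrite leq_trunc_div ltn_ceil. Qed.

Lemma sorted_window_points a : sorted (relpre snd <%R) (window_points a).
Proof.
rewrite /window_points; move: (floor_bounds a); move: (a * n %/ m)%N => c /andP [lo hi].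
case: ifP => big //=.
by rewrite !ltr_frac_nat ?addn_gt0 ?n_gt0 ?orbT // andbT; apply/andP; split; nia.
Qed.

Lemma window_grid a g k : (0 < k < d g)%N ->
  ((g, k%:R / (d g)%:R) \in s) && (a%:R / m%:R < (k%:R / (d g)%:R : rat) < a.+1%:R / m%:R)
  = (a * d g < k * m < a.+1 * d g)%N.
Proof.
move=> k_d; have d_gt0 : (0 < d g)%N by case/andP: k_d => /ltn_trans; apply.
have -> : (g, k%:R / (d g)%:R) \in s by apply/mem_s; exists k.
by rewrite !ltr_frac_nat.
Qed.

Lemma mem_window_points a x : (a.+1 < m)%N ->
  (x \in s) && (a%:R / m%:R < x.2 < a.+1%:R / m%:R) = (x \in window_points a).
Proof.
move=> a_lt; rewrite /window_points; move: (floor_bounds a); move: (a * n %/ m)%N => c c_bounds.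
apply/idP/idP => [| x_win].
  case: x => g v /andP [/mem_s [k k_d /= ->]].
  have d_gt0 : (0 < d g)%N by case/andP: k_d => /ltn_trans; apply.
  rewrite !ltr_frac_nat //; case: (gen_cases g) k_d => -> k_d.
  - by rewrite !ltn_pmul2r // ltnS => /andP [ak /(leq_trans ak)]; rewrite ltnn.
  - by rewrite (window_small_den _ n_lt_m c_bounds) => /andP [/eqP -> ->]; rewrite !inE eqxx orbT.
  - rewrite dY (window_sum_den _ _ c_bounds) ?n_gt0 // => /orP [/eqP -> | /andP [/eqP -> ->]].
      by rewrite inE eqxx.
    by rewrite !inE eqxx !orbT.
move: x_win; rewrite inE; case: ifP => big; rewrite ?inE ?orbF; [case/or3P | ]; move=> /eqP ->.
all: rewrite -?dY window_grid ?dY ?(window_small_den _ n_lt_m c_bounds).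
all: rewrite ?(window_sum_den _ _ c_bounds) ?n_gt0 ?big ?eqxx ?orbT //.
all: nia.
Qed.

Lemma slice_between_consecutive x0 i j : (i < j < size s)%N ->
  (nth x0 s i).1 = g1 -> (nth x0 s j).1 = g1 ->
  (forall k, (i < k < j)%N -> (nth x0 s k).1 != g1) ->
  let w := map fst (drop i.+1 (take j s)) in w = [:: GY] \/ w = [:: GY; g2; GY].
Proof.
move=> ijs s_i s_j no_g1 /=; have /andP [ij js] := ijs.
have lt_snd_trans : transitive (relpre (@snd gen rat) <%R) by move=> ? ? ?; apply: lt_trans.
have mem_slice x := mem_lt_sorted_slice x0 x s_lt_sorted ijs.
have slice_no_g1 x : x \in drop i.+1 (take j s) -> x.1 != g1.
  by case/(slice_nthP x0 i x (ltnW js)) => k /no_g1; move=> /[swap] <-.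
have [a a_m] : grid_point (nth x0 s i) by apply/mem_s/mem_nth/(ltn_trans ij).
have [a' a'_m] : grid_point (nth x0 s j) by apply/mem_s/mem_nth.
rewrite s_i s_j in a_m a'_m * => v_j v_i.
have a_lt_a' : (a < a')%N.
  have := sorted_ltn_nth lt_snd_trans x0 s_lt_sorted _ _ (ltn_trans ij js) js ij.
  by rewrite /= v_i v_j ltr_frac_nat // ltn_pmul2r.
have a'_eq : a' = a.+1.
  apply/eqP; rewrite eqn_leq a_lt_a' andbT leqNgt; apply/negP => a_lt.
  have /slice_no_g1 : (g1, a.+1%:R / m%:R) \in drop i.+1 (take j s).
    rewrite mem_slice v_i v_j !ltr_frac_nat // ltn_pmul2r // ltnSn ltn_pmul2r // a_lt !andbT.
    by apply/mem_s; exists a.+1 => //=; case/andP: a'_m => _; apply: ltn_trans.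
  by rewrite eqxx.
have slice_eq : drop i.+1 (take j s) = window_points a.
  apply: (irr_sorted_eq lt_snd_trans) => [? | | | x]; first exact: ltxx.
  - exact/drop_sorted/take_sorted/s_lt_sorted.
  - exact: sorted_window_points.
  by rewrite mem_slice v_i v_j a'_eq mem_window_points // -a'_eq; case/andP: a'_m.
by rewrite slice_eq /window_points; case: ifP => _; [right | left].
Qed.

End MergedGrids.

(* Edges of kind g lie on the lines [level e = k]: x = k (vertical), y = k
   (horizontal), x + y = k (diagonal). L_t meets such a line at time k / den g, where
   the coordinate recorded by [offset] equals slope g * k / den g; hence the edge is
   crossed at relative position crossing_num / den. *)
Definition den (p q : nat) (g : gen) : nat :=
  match g with GX => p | GY => p + q | GZ => q end.
Definition slope (p q : nat) (g : gen) : nat :=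
  match g with GZ => p | _ => q end.

Definition level (e : edge) : int :=
  match e.1 with GX => e.2.2 | GY => e.2.1 + e.2.2 + 1 | GZ => e.2.1 end.
Definition offset (e : edge) : int :=
  match e.1 with GZ => e.2.2 | _ => e.2.1 end.
Definition crossing_num (p q : nat) (e : edge) : int :=
  (slope p q e.1)%:Z * level e - (den p q e.1)%:Z * offset e.
Definition edge_at (g : gen) (k j : int) : edge :=
  (g, match g with GX => (j, k) | GY => (j, k - j - 1) | GZ => (k, j) end).

Lemma edge_atE e : edge_at e.1 (level e) (offset e) = e.
Proof.
by case: e => [[] [a b]] //; rewrite /edge_at /level /offset /=; congr (_, (_, _)); lia.
Qed.

Lemma level_edge_at g k j : level (edge_at g k j) = k.
Proof. by case: g; rewrite /level /=; lia. Qed.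

Lemma offset_edge_at g k j : offset (edge_at g k j) = j.
Proof. by case: g. Qed.

Lemma mem_index_range (n : nat) (i : int) : -1 <= i <= n%:Z ->
  i \in [seq k%:Z - 1 | k <- iota 0 (n + 2)].
Proof. by move=> i_range; apply/mapP; exists (absz (i + 1)); rewrite ?mem_iota /=; lia. Qed.

Lemma uniq_index_range (n : nat) : uniq [seq k%:Z - 1 | k <- iota 0 (n + 2)].
Proof. by rewrite map_inj_uniq ?iota_uniq // => x y /=; lia. Qed.

Lemma mem_candidates p q g (i j : int) : -1 <= i <= q%:Z -> -1 <= j <= p%:Z ->
  (g, (i, j)) \in candidates p q.
Proof.
move=> i_range j_range; apply: (allpairs_f (fun g ij => (g, ij))); first by case: g.
exact: allpairs_f (mem_index_range i_range) (mem_index_range j_range).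
Qed.

Lemma uniq_candidates p q : uniq (candidates p q).
Proof.
apply: (allpairs_uniq (f := fun g ij => (g, ij))) => // [|[? ?] [? ?] _ _ /= [-> ->] //].
by apply: allpairs_uniq; rewrite ?uniq_index_range // => [[? ?] [? ?] _ _ /= [-> ->]].
Qed.

Section Crossings.
Variables p q : nat.
Hypotheses (p_gt0 : (0 < p)%N) (q_gt0 : (0 < q)%N).

Lemma den_gt0 g : (0 < den p q g)%N.
Proof. by case: g; rewrite //= addn_gt0 p_gt0. Qed.

Lemma par_sE e : par_s p q e = (level e)%:~R / (den p q e.1)%:R.
Proof.
by rewrite /par_s /cross; case: e => [[] [a b]]; apply: frac_int_nat; rewrite /level /=; lia.
Qed.

Lemma par_uE e : par_u p q e = (crossing_num p q e)%:~R / (den p q e.1)%:R.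
Proof.
rewrite /par_u /cross; case: e => [[] [a b]]; apply: frac_int_nat.
all: by rewrite /crossing_num /level /offset /=; lia.
Qed.

Lemma crossesE e : crosses p q e =
  [&& 0 < crossing_num p q e, crossing_num p q e < den p q e.1,
      0 <= level e & level e <= den p q e.1].
Proof.
have d_gt0 := den_gt0 e.1.
rewrite /crosses par_uE par_sE /=.
rewrite ltr_pdivlMr ?ltr0n // ltr_pdivrMr ?ltr0n // ler_pdivlMr ?ltr0n // ler_pdivrMr ?ltr0n //.
by rewrite !mul0r !mul1r [(den p q e.1)%:R]pmulrn ltr0z ltr_int ler0z ler_int -andbA.
Qed.

Lemma crosses_candidates e : crosses p q e -> e \in candidates p q.
Proof.
rewrite crossesE /crossing_num; case: e => [[] [a b]] /and4P [u_gt0 u_lt k_ge0 k_le].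
all: by move: u_gt0 u_lt k_ge0 k_le; rewrite /level /offset /= => *; apply: mem_candidates; nia.
Qed.

Lemma mem_crossed_edges e : (e \in crossed_edges p q) = crosses p q e.
Proof.
by rewrite mem_sort mem_filter andb_idr //; apply: crosses_candidates.
Qed.

Lemma crossed_level e : crosses p q e -> 0 < level e < (den p q e.1)%:Z.
Proof.
rewrite crossesE /crossing_num => /and4P [u_gt0 u_lt k_ge0 k_le].
have [k0 | [kD | //]] : level e = 0 \/ level e = den p q e.1 \/ 0 < level e < den p q e.1 by lia.
- by have := @mulz_window_eq0 (den p q e.1) (- offset e); lia.
- by have := @mulz_window_eq0 (den p q e.1) ((slope p q e.1)%:Z - offset e); lia.
Qed.

Lemma crossed_edge_inj e f : crosses p q e -> crosses p q f ->
  e.1 = f.1 -> level e = level f -> e = f.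
Proof.
rewrite !crossesE /crossing_num => /and4P [ue_gt0 ue_lt _ _] /and4P [uf_gt0 uf_lt _ _].
move=> kind_eq level_eq; rewrite -[e]edge_atE -[f]edge_atE kind_eq level_eq.
suff -> : offset e = offset f by [].
have := @mulz_window_eq0 (den p q f.1) (offset e - offset f).
by rewrite kind_eq level_eq in ue_gt0 ue_lt; lia.
Qed.

Lemma coprime_den_slope g : coprime p q -> coprime (den p q g) (slope p q g).
Proof. by move=> pq; case: g => //=; rewrite coprime_sym // /coprime gcdnDr gcdnC. Qed.

Lemma crosses_edge_at g (k : nat) : coprime p q -> (0 < k < den p q g)%N ->
  crosses p q (edge_at g k (slope p q g * k %/ den p q g)%N).
Proof.
move=> /(coprime_den_slope g) cop /andP [k_gt0 k_lt].
have r_gt0 : (0 < slope p q g * k %% den p q g)%N.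
  rewrite lt0n -/(dvdn _ _) Gauss_dvdr //; apply/negP => /(dvdn_leq k_gt0).
  by rewrite leqNgt k_lt.
have := divn_eq (slope p q g * k) (den p q g); have := ltn_pmod (slope p q g * k) (den_gt0 g).
rewrite crossesE /crossing_num level_edge_at offset_edge_at /=.
move: r_gt0; move: (_ %% _)%N (_ %/ _)%N => r c r_gt0 r_lt slope_k.
by apply/and3P; split; lia.
Qed.

Definition crossing_params : seq (gen * rat) :=
  [seq (e.1, par_s p q e) | e <- crossed_edges p q].

Lemma sorted_crossing_params : sorted (relpre snd <=%R) crossing_params.
Proof. by rewrite sorted_map; apply: sort_sorted => e f; apply: le_total. Qed.

Lemma uniq_crossing_params : uniq crossing_params.
Proof.
rewrite map_inj_in_uniq ?sort_uniq ?filter_uniq ?uniq_candidates // => e f.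
rewrite !mem_crossed_edges => e_cr f_cr [kind_eq].
have d_neq0 : (den p q f.1)%:R != 0 :> rat by rewrite pnatr_eq0 -lt0n den_gt0.
rewrite !par_sE kind_eq => /(divIf d_neq0) level_eq; apply: crossed_edge_inj => //.
by apply/eqP; rewrite -(eqr_int rat) level_eq.
Qed.

Lemma mem_crossing_params (pq_coprime : coprime p q) x :
  x \in crossing_params <-> grid_point (den p q) x.
Proof.
split=> [/mapP [e] | [k k_d]].
  rewrite mem_crossed_edges => e_cr ->; have /andP [k_gt0 k_lt] := crossed_level e_cr.
  exists (absz (level e)); rewrite /= ?par_sE; first lia.
  by rewrite [in RHS]pmulrn gez0_abs // ltW.
case: x k_d => g v /= k_d ->; apply/mapP.
exists (edge_at g k (slope p q g * k %/ den p q g)%N).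
  by rewrite mem_crossed_edges crosses_edge_at.
by rewrite par_sE level_edge_at.
Qed.

End Crossings.

Lemma between_prop_of_slices (T : Type) x0 (s : seq (gen * T)) (w : seq letter) g a b :
  map fst w = map fst s ->
  (forall i j, (i < j < size s)%N -> (nth x0 s i).1 = g -> (nth x0 s j).1 = g ->
     (forall k, (i < k < j)%N -> (nth x0 s k).1 != g) ->
     let u := map fst (drop i.+1 (take j s)) in u = [:: a] \/ u = [:: a; b; a]) ->
  between_prop g a b w.
Proof.
move=> w_s slices i j; have size_w : size w = size s by rewrite -(size_map fst w) w_s size_map.
have fst_nth k : (k < size s)%N -> (nth (GX, true) w k).1 = (nth x0 s k).1.
  by move=> k_lt; rewrite -(nth_map _ GX) ?size_w // w_s (nth_map x0).
rewrite size_w /= => /[dup] /andP [ij js] ijs; rewrite !is_genE !fst_nth ?(ltn_trans ij) //.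
move=> /eqP s_i /eqP s_j no_g; rewrite map_drop map_take w_s -map_take -map_drop.
apply: slices => // k /[dup] /andP [_ kj] ikj.
by rewrite -fst_nth ?(ltn_trans kj) // -is_genE no_g.
Qed.

Theorem lemma4p6 (p q : nat) :
  (0 < p)%N -> (0 < q)%N -> coprime p q ->
  ((p < q)%N -> between_prop GZ GY GX (omega p q)) /\
  ((q < p)%N -> between_prop GX GY GZ (omega p q)).
Proof.
move=> p_gt0 q_gt0 pq_coprime.
have omega_fst : map fst (omega p q) = map fst (crossing_params p q) by rewrite -!map_comp.
have s_sorted := sorted_crossing_params p q; have s_uniq := uniq_crossing_params p_gt0 q_gt0.
have mem_s := mem_crossing_params p_gt0 q_gt0 pq_coprime.
split=> lt_pq; apply: (between_prop_of_slices (x0 := (GX, 0)) omega_fst) => i j.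
- apply: (slice_between_consecutive (g1 := GZ) (g2 := GX) _ _ _ _ _ s_sorted s_uniq mem_s) => //.
  + by case; [apply: Or32 | apply: Or33 | apply: Or31].
  + exact: addnC.
  + by rewrite coprime_sym.
- apply: (slice_between_consecutive (g1 := GX) (g2 := GZ) _ _ _ _ _ s_sorted s_uniq mem_s) => //.
  by case; [apply: Or31 | apply: Or33 | apply: Or32].
Qed.
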